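(* Let $\Gamma=(V,E)$ be a finite connected planar quiver, $k$ a field of characteristic $0$, and let $I\subseteq R^2$ be an ideal of $k\Gamma$ generated by paths such that $k\Gamma/I$ is complete and acyclic. Then the classes of the elements of $(\overline{\mathfrak{B}}_2\setminus\overline{\mathfrak{B}}_E)\cup\overline{\mathfrak{B}}_{\mathbb{P}}$ form a $k$-basis of $HH^1(k\Gamma/I)$.
   Context: For a path $p$, $t(p),h(p)$ are its start and end vertex; paths multiply by left-to-right concatenation (product $0$ if they do not concatenate). $R$ is the ideal generated by $E$, $\overline{x}=x+I$. $\mathscr{Q}$ is the set of residue classes of paths not in $I$; for $\overline{s}\in\mathscr{Q}$ the class of $s\notin I$, $r\parallel\overline{s}$ means $t(r)=t(s)$, $h(r)=h(s)$. $k\Gamma/I$ is complete if for any two parallel paths $p,p'$, $p\in I$ implies $p'\in I$; acyclic if every path $p\notin I$ with $t(p)=h(p)$ is a vertex. $HH^1(k\Gamma/I)$ is the space of derivations of $k\Gamma/I$ modulo inner derivations. For $r\in E$, $\overline{s}\in\mathscr{Q}$, $r\parallel\overline{s}$, $\overline{D}_{r,\overline{s}}$ is the derivation of $k\Gamma/I$ induced by the unique $k$-linear map $D_{r,\overline{s}}:k\Gamma\to k\Gamma/I$ with $D(xy)=D(x)\overline{y}+\overline{x}D(y)$, $D_{r,\overline{s}}(r)=\overline{s}$ and vanishing on other arrows and vertices. $\overline{\mathfrak{B}}_2$ is the set of all such $\overline{D}_{r,\overline{s}}$; $\overline{\mathfrak{B}}_E=\{\overline{D}_{p,\overline{p}}\mid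 p\in E\}$. A planar quiver has a fixed embedding in $\mathbb{R}^2$; its faces are the connected components of $\mathbb{R}^2\setminus\Gamma$, one of which, $f_0$, is unbounded. For a face $f$ whose boundary consists of the ordered arrows $p_1,\dots,p_s$ (arrows bordering $f$ on both sides appear twice), $\overline{D}_{\mathbbm{p}_f}=\sum_i\epsilon_i\overline{D}_{p_i,\overline{p_i}}$ with $\epsilon_i=+1$ if $p_i$ runs clockwise viewed from the interior of $f$ and $-1$ otherwise. $\overline{\mathfrak{B}}_{\mathbb{P}}=\{\overline{D}_{\mathbbm{p}_f}\mid f\neq f_0\}$. *)

From HB Require Import structures.
From mathcomp Require Import all_boot all_order all_algebra all_fingroup.
Set Implicit Arguments. Unset Strict Implicit. Unset Printing Implicit Defensive.
Import GRing.Theory.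
Local Open Scope ring_scope.

(* A finite quiver Gamma = (V, E) with tail t (start) and head h (end).       *)
(* A (raw) path is a pair (v, s) : V * seq E : the start vertex v and the     *)
(* list of arrows, concatenated left to right; (v, [::]) is the vertex v.     *)
Section Quiver.
Variables (V E : finType) (t h : E -> V).

Definition consec (e f : E) : bool := h e == t f.

Definition is_qpath (v : V) (s : seq E) : bool :=
  if s is e :: s' then (t e == v) && path consec e s' else true.

Definition pend (v : V) (s : seq E) : V := last v (map h s).

Definition undir_adj : rel V :=
  fun u w => [exists e, ((t e == u) && (h e == w)) || ((h e == u) && (t e == w))].
Definition quiver_connected : Prop := forall u w : V, connect undir_adj u w.

(* Planar embedding, combinatorially: a rotation system on the darts          *)
(* (e, true) (leaving t e) and (e, false) (leaving h e), i.e. a permutation   *)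
(* sigma cyclically ordering (counterclockwise) the darts around each vertex, *)
(* of genus 0 (Euler's formula).  Faces are the orbits of the face            *)
(* permutation d |-> sigma (reverse d); each such orbit is the boundary walk  *)
(* of a face, traversed clockwise (face on the right), so that the forward    *)
(* dart (e, true) lies in the orbit of f iff e runs clockwise around f.       *)
Definition dorig (d : E * bool) : V := if d.2 then t d.1 else h d.1.
Definition drev (d : E * bool) : E * bool := (d.1, ~~ d.2).

Definition rotation_system (sigma : {perm (E * bool)}) : Prop :=
  (forall d, dorig (sigma d) = dorig d) /\
  (forall d d', dorig d = dorig d' -> fconnect sigma d d').

Definition face_perm (sigma : {perm (E * bool)}) (d : E * bool) : E * bool :=
  sigma (drev d).

Definition faces (sigma : {perm (E * bool)}) : {set {set E * bool}} :=
  [set [set d' | fconnect (face_perm sigma) d d'] | d : E * bool].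

Definition planar_embedding (sigma : {perm (E * bool)}) : Prop :=
  rotation_system sigma /\
  ((0 < #|E|)%N -> (#|V| + #|faces sigma| = #|E| + 2)%N).

(* The ideal I generated by the paths in G (each of length >= 2, I in R^2).  *)
Variable G : pred (seq E).

Definition gens_ok : Prop :=
  forall g, G g -> (1 < size g)%N /\ exists v, is_qpath v g.

Definition in_I (s : seq E) : bool :=
  [exists i : 'I_(size s).+1, exists j : 'I_(size s).+1, G (drop i (take j s))].

Definition complete : Prop :=
  forall v s v' s', is_qpath v s -> is_qpath v' s' ->
    v = v' -> pend v s = pend v' s' -> in_I s -> in_I s'.

Definition acyclic : Prop :=
  forall v s, is_qpath v s -> ~~ in_I s -> pend v s = v -> s = [::].

(* path not in I has length < #|V|, so we enumerate paths of length < #|V|.   *)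
Definition Pb := (V * {n : 'I_#|V| & n.-tuple E})%type.
Definition pb_seq (x : Pb) : seq E := tagged x.2.
Definition qpred (x : Pb) : bool := is_qpath x.1 (pb_seq x) && ~~ in_I (pb_seq x).
Definition Qt := {x : Pb | qpred x}.

Definition qv (q : Qt) : V := (val q).1.
Definition qs (q : Qt) : seq E := pb_seq (val q).

(* The algebra k Gamma / I, as the k-space with basis Q.                      *)
Variable k : fieldType.
Definition Alg := {ffun Qt -> k^o}.

(* class in k Gamma / I of the path (v, s) (zero if the path is in I) *)
Definition pcls (v : V) (s : seq E) : Alg :=
  [ffun q => ((qv q == v) && (qs q == s))%:R].

Definition mulA (x y : Alg) : Alg :=
  \sum_(p : Qt) \sum_(q : Qt)
     if pend (qv p) (qs p) == qv q then (x p * y q) *: pcls (qv p) (qs p ++ qs q)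
     else 0.

Definition is_derivation (D : Alg -> Alg) : Prop :=
  (forall (a : k) (x y : Alg), D (a *: x + y) = a *: D x + D y) /\
  (forall x y : Alg, D (mulA x y) = mulA (D x) y + mulA x (D y)).

Definition is_inner (D : Alg -> Alg) : Prop :=
  exists a : Alg, forall x, D x = mulA a x - mulA x a.

(* \bar D_{r, \bar s}: induced by the derivation of k Gamma sending r to s
   and vanishing on other arrows and vertices; on a path a_1 ... a_n it is
   sum_{i, a_i = r} a_1 .. a_{i-1} s a_{i+1} .. a_n. *)
Definition Dr (r : E) (s : seq E) (x : Alg) : Alg :=
  \sum_(q : Qt) x q *:
    \sum_(i < size (qs q)) if nth r (qs q) i == r then
       pcls (qv q) (take i (qs q) ++ s ++ drop i.+1 (qs q)) else 0.

Definition B2idx := {rs : E * Qt |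
  [&& qv rs.2 == t rs.1, pend (qv rs.2) (qs rs.2) == h rs.1 & qs rs.2 != [:: rs.1]]}.

Variables (sigma : {perm (E * bool)}) (f0 : {set E * bool}).

(* index set of B_P : the faces other than the unbounded face f0 *)
Definition BPidx := {f : {set E * bool} | (f \in faces sigma) && (f != f0)}.

Definition Dface (f : {set E * bool}) (x : Alg) : Alg :=
  \sum_(d in f) (if d.2 then 1 else -1) *: Dr d.1 [:: d.1] x.

Definition hh1_family (i : (B2idx + BPidx)%type) : Alg -> Alg :=
  match i with
  | inl rs => Dr (val rs).1 (qs (val rs).2)
  | inr f => Dface (val f)
  end.

End Quiver.

(* The classes of the family F : I -> Der form a k-basis of HH^1 = Der/Inn. *)
Definition hh1_basis (V E : finType) (t h : E -> V) (G : pred (seq E))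
  (k : fieldType) (I : finType) (F : I -> Alg t h G k -> Alg t h G k) : Prop :=
  (forall i, is_derivation (F i)) /\
  (forall c : I -> k, is_inner (fun x => \sum_i c i *: F i x) -> forall i, c i = 0) /\
  (forall D, is_derivation D ->
     exists c : I -> k, is_inner (fun x => D x - \sum_i c i *: F i x)).

(* Subtracting an inner derivation, any derivation D kills the vertex idempotents;
   it is then determined by the images of the arrows, and D r is a combination of
   paths parallel to r (completeness makes every D_{r,s} well defined).  The
   D_{r,s} with s <> r account for all off-diagonal parts, so what remains is a
   function lambda on arrows with D r = lambda(r) r.  Inner derivations by
   combinations of vertices give exactly the coboundaries mu(t r) - mu(h r)
   (acyclicity forces an element commuting with all vertices to be such a
   combination), and D_{p_f} gives the boundary of the face f.  So the theorem
   reduces to: on a connected plane quiver every function on arrows is uniquely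
   a coboundary plus a combination of bounded faces.  Uniqueness: the grounded
   Laplacian is positive definite over Q, hence invertible in characteristic 0,
   and a combination of faces with zero boundary is constant on the connected
   dual, hence zero as it vanishes on f0.  Existence: Euler's formula
   |V| + |faces| = |E| + 2 makes the dimensions match. *)

From Pilot Require Import Defs.
From HB Require Import structures.
From mathcomp Require Import all_boot all_order all_algebra all_fingroup.
From mathcomp Require Import zify ring.
Set Implicit Arguments. Unset Strict Implicit. Unset Printing Implicit Defensive.
Import GRing.Theory Num.Theory.
Local Open Scope ring_scope.

Section Paths.
Variables (V E : finType) (t h : E -> V) (G : pred (seq E)).

Local Notation qpath := (is_qpath t h).
Local Notation pend := (pend h).
Local Notation in_I := (in_I G).

Lemma qpath_cat v s1 s2 : qpath v (s1 ++ s2) = qpath v s1 && qpath (pend v s1) s2.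
Proof.
case: s1 => [|e s1] //=.
rewrite cat_path -andbA; congr (_ && (_ && _)).
by case: s2 => [|f s2] //=; rewrite /consec /pend /= last_map eq_sym.
Qed.

Lemma pend_cat v s1 s2 : pend v (s1 ++ s2) = pend (pend v s1) s2.
Proof. by rewrite /pend map_cat last_cat. Qed.

Lemma qpath1 v r : qpath v [:: r] = (t r == v).
Proof. by rewrite /= andbT. Qed.

Lemma qpath_subst v a b s1 s2 :
  qpath v (a ++ s1 ++ b) -> qpath (pend v a) s2 -> pend (pend v a) s2 = pend (pend v a) s1 ->
  qpath v (a ++ s2 ++ b) /\ pend v (a ++ s2 ++ b) = pend v (a ++ s1 ++ b).
Proof.
rewrite !qpath_cat => /and3P [-> _ s1b] s2P s12; split; first by rewrite s2P s12 s1b.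
by rewrite !pend_cat s12.
Qed.

Lemma in_IP s : reflect (exists s1 s2 s3, s = s1 ++ s2 ++ s3 /\ G s2) (in_I s).
Proof.
apply: (iffP existsP) => [[i /existsP [j Gij]] | [s1 [s2 [s3 [-> Gs2]]]]].
  exists (take i (take j s)), (drop i (take j s)), (drop j s).
  by rewrite catA !cat_take_drop.
have Hi : (size s1 < (size (s1 ++ s2 ++ s3)).+1)%N by rewrite !size_cat; lia.
have Hj : (size s1 + size s2 < (size (s1 ++ s2 ++ s3)).+1)%N by rewrite !size_cat; lia.
exists (Ordinal Hi); apply/existsP; exists (Ordinal Hj) => /=.
by rewrite catA take_size_cat ?size_cat // drop_size_cat.
Qed.

Lemma in_I_infix s1 s2 s3 : in_I s2 -> in_I (s1 ++ s2 ++ s3).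
Proof.
case/in_IP => [a [b [c [-> Gb]]]]; apply/in_IP.
by exists (s1 ++ a), b, (c ++ s3); rewrite -!catA.
Qed.

Lemma in_I_catl s1 s2 : in_I s2 -> in_I (s1 ++ s2).
Proof. by move=> I2; rewrite -[s1 ++ s2]cats0 -catA; apply: in_I_infix. Qed.

Lemma in_I_catr s1 s2 : in_I s1 -> in_I (s1 ++ s2).
Proof. by move=> I1; rewrite -[s1 ++ s2]cat0s; apply: in_I_infix. Qed.

Hypothesis G_ok : gens_ok t h G.

Lemma in_I_size s : in_I s -> (1 < size s)%N.
Proof.
case/in_IP => [a [b [c [-> Gb]]]].
have [Hb _] := G_ok Gb; rewrite !size_cat; lia.
Qed.

Hypothesis I_acyclic : acyclic t h G.

Lemma arrow_not_loop r : t r != h r.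
Proof.
apply/eqP => loop; have := I_acyclic (v := t r) (s := [:: r]).
rewrite qpath1 eqxx => /(_ isT).
case: (boolP (in_I [:: r])) => [/in_I_size //|notI /(_ isT)].
by rewrite /Defs.pend /= loop => /(_ erefl).
Qed.

End Paths.

Section PathAlgebra.
Variables (V E : finType) (t h : E -> V) (G : pred (seq E)) (k : fieldType).

Local Notation qpath := (is_qpath t h).
Local Notation pend := (pend h).
Local Notation in_I := (in_I G).
Local Notation A := (Alg t h G k).
Local Notation Q := (Qt t h G).
Local Notation pcls := (pcls t h G k).
Local Notation mulA := (@Defs.mulA V E t h G k).

Definition qrep v w := [&& qpath v w, ~~ in_I w & (size w < #|V|)%N].

Lemma qrep_size v w : qrep v w -> (size w < #|V|)%N.
Proof. by case/and3P. Qed.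

Lemma qrep_qpred v w (vw : qrep v w) :
  qpred t h G (v, Tagged (fun n : 'I_#|V| => n.-tuple E)
                  (in_tuple w : (Ordinal (qrep_size vw)).-tuple E)).
Proof. by case/and3P: (vw) => vwP notI _; rewrite /qpred /pb_seq /= vwP notI. Qed.

Definition toQ v w (vw : qrep v w) : Q := exist (qpred t h G) _ (qrep_qpred vw).

Lemma toQ_v v w (vw : qrep v w) : qv (toQ vw) = v.
Proof. by []. Qed.

Lemma toQ_s v w (vw : qrep v w) : qs (toQ vw) = w.
Proof. by []. Qed.

Lemma qrepQ (q : Q) : qrep (qv q) (qs q).
Proof.
case: q => [[v [n s]] /= qP]; rewrite /qrep /qv /qs /=.
by case/andP: qP => /= -> ->; rewrite /pb_seq /= size_tuple ltn_ord.
Qed.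

Lemma qpathQ (q : Q) : qpath (qv q) (qs q).
Proof. by case/and3P: (qrepQ q). Qed.

Lemma Q_inj (q1 q2 : Q) : qv q1 = qv q2 -> qs q1 = qs q2 -> q1 = q2.
Proof.
case: q1 q2 => [[v1 [n1 s1]] H1] [[v2 [n2 s2]] H2]; rewrite /qv /qs /pb_seq /= => ev es.
apply: val_inj => /=; subst v2.
have en : n1 = n2 by apply: val_inj; rewrite /= -(size_tuple s1) -(size_tuple s2) es.
by subst n2; rewrite (val_inj es).
Qed.

Definition bq (q : Q) : A := pcls (qv q) (qs q).

Lemma bqE q q' : bq q q' = (q' == q)%:R.
Proof.
rewrite ffunE; case: (eqVneq q' q) => [->|ne]; first by rewrite !eqxx.
case: (boolP ((qv q' == qv q) && (qs q' == qs q))) => // /andP [/eqP ev /eqP es].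
by rewrite (Q_inj ev es) eqxx in ne.
Qed.

Lemma pcls_toQ v w (vw : qrep v w) : pcls v w = bq (toQ vw).
Proof. by []. Qed.

Lemma pcls_nrep v w : ~~ qrep v w -> pcls v w = 0.
Proof.
move=> nvw; apply/ffunP => q; rewrite !ffunE.
case: (boolP ((qv q == v) && (qs q == w))) => // /andP [/eqP ev /eqP ew].
by rewrite -ev -ew qrepQ in nvw.
Qed.

Lemma alg_coefZ (a : k) (x : A) q : (a *: x) q = a * x q.
Proof. exact: ffunE. Qed.

Lemma alg_coefD (x y : A) q : (x + y) q = x q + y q.
Proof. exact: ffunE. Qed.

Lemma alg_coefN (x : A) q : (- x) q = - x q.
Proof. exact: ffunE. Qed.

Lemma alg_coefB (x y : A) q : (x - y) q = x q - y q.
Proof. by rewrite alg_coefD alg_coefN. Qed.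

Lemma alg_coef0 q : (0 : A) q = 0.
Proof. exact: ffunE. Qed.

Lemma alg_coef_sum I (r : seq I) (P : pred I) (F : I -> A) q :
  (\sum_(i <- r | P i) F i) q = \sum_(i <- r | P i) F i q.
Proof.
elim: r => [|a r IH]; first by rewrite !big_nil alg_coef0.
by rewrite !big_cons; case: (P a); rewrite ?alg_coefD IH.
Qed.

Lemma alg_coef_sum_bq (g : Q -> k) q0 : (\sum_q g q *: bq q) q0 = g q0.
Proof.
rewrite alg_coef_sum (bigD1 q0) //= big1 => [|q nq].
  by rewrite alg_coefZ bqE eqxx mulr1 addr0.
by rewrite alg_coefZ bqE eq_sym (negbTE nq) mulr0.
Qed.

Lemma alg_expand (x : A) : x = \sum_q x q *: bq q.
Proof. by apply/ffunP => q; rewrite alg_coef_sum_bq. Qed.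

Definition mulb (p q : Q) : A :=
  if pend (qv p) (qs p) == qv q then pcls (qv p) (qs p ++ qs q) else 0.

Lemma mulAE x y : mulA x y = \sum_p \sum_q (x p * y q) *: mulb p q.
Proof.
apply: eq_bigr => p _; apply: eq_bigr => q _; rewrite /mulb.
by case: ifP; rewrite ?scaler0.
Qed.

Lemma mulADl x y z : mulA (x + y) z = mulA x z + mulA y z.
Proof.
rewrite !mulAE -big_split; apply: eq_bigr => p _; rewrite -big_split.
by apply: eq_bigr => q _; rewrite alg_coefD mulrDl scalerDl.
Qed.

Lemma mulADr x y z : mulA x (y + z) = mulA x y + mulA x z.
Proof.
rewrite !mulAE -big_split; apply: eq_bigr => p _; rewrite -big_split.
by apply: eq_bigr => q _; rewrite alg_coefD mulrDr scalerDl.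
Qed.

Lemma mulAZl a x y : mulA (a *: x) y = a *: mulA x y.
Proof.
rewrite !mulAE scaler_sumr; apply: eq_bigr => p _; rewrite scaler_sumr.
by apply: eq_bigr => q _; rewrite alg_coefZ scalerA mulrA.
Qed.

Lemma mulAZr a x y : mulA x (a *: y) = a *: mulA x y.
Proof.
rewrite !mulAE scaler_sumr; apply: eq_bigr => p _; rewrite scaler_sumr.
by apply: eq_bigr => q _; rewrite alg_coefZ scalerA mulrCA.
Qed.

Lemma mulA0l y : mulA 0 y = 0.
Proof. by rewrite -[X in mulA X _](scale0r (0 : A)) mulAZl scale0r. Qed.

Lemma mulA0r y : mulA y 0 = 0.
Proof. by rewrite -[X in mulA _ X](scale0r (0 : A)) mulAZr scale0r. Qed.

Lemma mulABl x y z : mulA (x - y) z = mulA x z - mulA y z.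
Proof. by rewrite mulADl -scaleN1r mulAZl scaleN1r. Qed.

Lemma mulABr x y z : mulA x (y - z) = mulA x y - mulA x z.
Proof. by rewrite mulADr -scaleN1r mulAZr scaleN1r. Qed.

Lemma mulA_suml I (r : seq I) (P : pred I) (F : I -> A) y :
  mulA (\sum_(i <- r | P i) F i) y = \sum_(i <- r | P i) mulA (F i) y.
Proof.
elim: r => [|a r IH]; first by rewrite !big_nil mulA0l.
by rewrite !big_cons; case: (P a); rewrite ?mulADl IH.
Qed.

Lemma mulA_sumr I (r : seq I) (P : pred I) (F : I -> A) y :
  mulA y (\sum_(i <- r | P i) F i) = \sum_(i <- r | P i) mulA y (F i).
Proof.
elim: r => [|a r IH]; first by rewrite !big_nil mulA0r.
by rewrite !big_cons; case: (P a); rewrite ?mulADr IH.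
Qed.

Lemma mulA_bq p q : mulA (bq p) (bq q) = mulb p q.
Proof.
rewrite mulAE (bigD1 p) //= [X in _ + X]big1 => [|p' np]; last first.
  by apply: big1 => q' _; rewrite !bqE (negbTE np) mul0r scale0r.
rewrite addr0 (bigD1 q) //= [X in _ + X]big1 => [|q' nq].
  by rewrite !bqE !eqxx mulr1 scale1r addr0.
by rewrite !bqE (negbTE nq) mulr0 scale0r.
Qed.

Lemma qrep_cat v w w' : qpath v w -> qpath (pend v w) w' -> qrep v (w ++ w') ->
  qrep v w && qrep (pend v w) w'.
Proof.
move=> wP w'P /and3P [_ notI small]; rewrite /qrep wP w'P /=.
apply/andP; split; apply/andP; split.
- by apply: contra notI; apply: in_I_catr.
- by apply: leq_ltn_trans small; rewrite size_cat leq_addr.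
- by apply: contra notI; apply: in_I_catl.
- by apply: leq_ltn_trans small; rewrite size_cat leq_addl.
Qed.

Lemma mulA_pcls v w v' w' : qpath v w -> qpath v' w' ->
  mulA (pcls v w) (pcls v' w') = if pend v w == v' then pcls v (w ++ w') else 0.
Proof.
move=> wP w'P.
case: (boolP (qrep v w)) => vw; last first.
  rewrite pcls_nrep // mulA0l; case: eqP => // e; rewrite pcls_nrep //.
  by apply: contra vw => /qrep_cat; rewrite e => /(_ wP w'P) /andP [].
case: (boolP (qrep v' w')) => vw'; last first.
  rewrite (pcls_nrep vw') mulA0r; case: eqP => // e; rewrite pcls_nrep //.
  by apply: contra vw' => /qrep_cat; rewrite e => /(_ wP w'P) /andP [].
by rewrite (pcls_toQ vw) (pcls_toQ vw') mulA_bq.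
Qed.

Lemma mulA_bq_assoc p q r :
  mulA (mulA (bq p) (bq q)) (bq r) = mulA (bq p) (mulA (bq q) (bq r)).
Proof.
rewrite /bq !mulA_pcls ?qpathQ //.
case: (eqP (x := pend (qv p) (qs p))) => e1; case: (eqP (x := pend (qv q) (qs q))) => e2.
- rewrite !mulA_pcls ?qpathQ ?qpath_cat ?e1 ?e2 ?eqxx ?qpathQ ?catA ?pend_cat ?e1 //=.
  by rewrite e2 eqxx.
- rewrite mulA0r mulA_pcls ?qpath_cat ?e1 ?qpathQ ?pend_cat ?e1 //=.
  by move/eqP: e2 => /negbTE ->.
- by rewrite mulA0l mulA_pcls ?qpath_cat ?e2 ?qpathQ //; move/eqP: e1 => /negbTE ->.
- by rewrite mulA0l mulA0r.
Qed.

Lemma mulA_expandl x y : mulA x y = \sum_p x p *: mulA (bq p) y.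
Proof. by rewrite {1}[x]alg_expand mulA_suml; apply: eq_bigr => p _; apply: mulAZl. Qed.

Lemma mulA_expandr x y : mulA x y = \sum_q y q *: mulA x (bq q).
Proof. by rewrite {1}[y]alg_expand mulA_sumr; apply: eq_bigr => q _; apply: mulAZr. Qed.

Lemma mulA_assoc x y z : mulA (mulA x y) z = mulA x (mulA y z).
Proof.
rewrite (mulA_expandl x y) (mulA_expandl x (mulA y z)) mulA_suml; apply: eq_bigr => p _.
rewrite mulAZl; congr (_ *: _).
rewrite (mulA_expandr (bq p) y) (mulA_expandl y z) mulA_suml mulA_sumr; apply: eq_bigr => q _.
rewrite mulAZl mulAZr; congr (_ *: _).
rewrite (mulA_expandr (mulA (bq p) (bq q)) z) (mulA_expandr (bq q) z) mulA_sumr.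
by apply: eq_bigr => r _; rewrite mulAZr mulA_bq_assoc.
Qed.

Lemma mulA_ifl (b : bool) (x y : A) : mulA (if b then x else 0) y = if b then mulA x y else 0.
Proof. by case: b; rewrite ?mulA0l. Qed.

Lemma mulA_ifr (b : bool) (x y : A) : mulA y (if b then x else 0) = if b then mulA y x else 0.
Proof. by case: b; rewrite ?mulA0r. Qed.

End PathAlgebra.

Section Derivations.
Variables (V E : finType) (t h : E -> V) (G : pred (seq E)) (k : fieldType).

Local Notation A := (Alg t h G k).
Local Notation mulA := (@Defs.mulA V E t h G k).
Local Notation bq := (@bq V E t h G k).
Local Notation derivation := (@is_derivation V E t h G k).

Definition leibniz (D : A -> A) := forall x y, D (mulA x y) = mulA (D x) y + mulA x (D y).

Section LinearMap.
Variable D : A -> A.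
Hypothesis D_lin : forall (a : k) (x y : A), D (a *: x + y) = a *: D x + D y.
HB.instance Definition _ := GRing.isLinear.Build k A A *:%R D D_lin.

Lemma lin0 : D 0 = 0.
Proof. exact: raddf0. Qed.

Lemma lin_expand x : D x = \sum_q x q *: D (bq q).
Proof. by rewrite {1}[x]alg_expand linear_sum; apply: eq_bigr => q _; rewrite linearZ. Qed.

Lemma leibniz_bq :
  (forall p q, D (mulA (bq p) (bq q)) = mulA (D (bq p)) (bq q) + mulA (bq p) (D (bq q))) ->
  leibniz D.
Proof.
move=> Dbq x y; rewrite [x]alg_expand [y]alg_expand mulA_suml !linear_sum mulA_suml mulA_suml.
rewrite -big_split; apply: eq_bigr => p _; rewrite mulA_sumr !linear_sum !mulA_sumr.
rewrite -big_split; apply: eq_bigr => q _.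
by rewrite mulAZl mulAZr !linearZ /= mulAZl mulAZr mulAZl mulAZr Dbq !scalerDr.
Qed.

End LinearMap.

Lemma derivation_comb I (r : seq I) (P : pred I) (c : I -> k) (F : I -> A -> A) :
  (forall i, derivation (F i)) -> derivation (fun x => \sum_(i <- r | P i) c i *: F i x).
Proof.
move=> Fder; split.
  move=> a x y; rewrite scaler_sumr -big_split; apply: eq_bigr => i _.
  by have [-> _] := Fder i; rewrite scalerDr !scalerA mulrC.
move=> x y; rewrite mulA_suml mulA_sumr -big_split; apply: eq_bigr => i _.
by have [_ ->] := Fder i; rewrite scalerDr mulAZl mulAZr.
Qed.

Lemma derivationB D1 D2 : derivation D1 -> derivation D2 -> derivation (fun x => D1 x - D2 x).
Proof.
move=> [L1 M1] [L2 M2]; split.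
  by move=> a x y; rewrite L1 L2 scalerBr addrACA opprD.
move=> x y; rewrite M1 M2 mulABl mulABr !opprD !addrA; congr (_ + _).
by rewrite addrAC -!addrA; congr (_ + _); rewrite addrC.
Qed.

Lemma derivation_inner a : derivation (fun x => mulA a x - mulA x a).
Proof.
split.
  move=> b x y; rewrite mulADr mulADl mulAZr mulAZl scalerBr.
  by rewrite addrACA opprD.
move=> x y; rewrite mulABl mulABr !mulA_assoc.
by rewrite !addrA; congr (_ - _); rewrite addrNK.
Qed.

Lemma innerD (a b x : A) :
  mulA (a + b) x - mulA x (a + b) = (mulA a x - mulA x a) + (mulA b x - mulA x b).
Proof. by rewrite mulADl mulADr opprD addrACA. Qed.

End Derivations.

Section Generators.
Variables (V E : finType) (t h : E -> V) (G : pred (seq E)) (k : fieldType).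

Local Notation qpath := (is_qpath t h).
Local Notation pend := (pend h).
Local Notation A := (Alg t h G k).
Local Notation Q := (Qt t h G).
Local Notation pcls := (pcls t h G k).
Local Notation mulA := (@Defs.mulA V E t h G k).
Local Notation bq := (@bq V E t h G k).
Local Notation derivation := (@is_derivation V E t h G k).

Hypothesis G_ok : gens_ok t h G.
Hypothesis I_acyclic : acyclic t h G.

Lemma qrep_vertex u : qrep t h G u [::].
Proof.
rewrite /qrep /=; apply/andP; split; first by apply/negP => /(in_I_size G_ok).
by apply/card_gt0P; exists u.
Qed.

Lemma qrep_arrow r : qrep t h G (t r) [:: r].
Proof.
rewrite /qrep qpath1 eqxx /=; apply/andP; split; first by apply/negP => /(in_I_size G_ok).
apply: leq_trans (max_card (mem [set t r; h r])).
by rewrite cards2 (arrow_not_loop G_ok I_acyclic).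
Qed.

Definition vtxQ u := toQ (qrep_vertex u).
Definition arrQ r := toQ (qrep_arrow r).
Definition vtx u : A := pcls u [::].
Definition arr r : A := pcls (t r) [:: r].

Lemma vtx_bq u : vtx u = bq (vtxQ u).
Proof. by []. Qed.

Lemma arr_bq r : arr r = bq (arrQ r).
Proof. by []. Qed.

Lemma vtxQ_eq (q : Q) : qs q = [::] -> q = vtxQ (qv q).
Proof. by move=> e; apply: Q_inj. Qed.

Lemma arrQ_eq (q : Q) r : qs q = [:: r] -> q = arrQ r.
Proof. by move=> e; apply: Q_inj => //; have := qpathQ q; rewrite e qpath1 => /eqP. Qed.

Lemma mulA_vtxl u v w : qpath v w -> mulA (vtx u) (pcls v w) = if u == v then pcls v w else 0.
Proof. by move=> wP; rewrite /vtx mulA_pcls //=; case: eqP => // <-. Qed.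

Lemma mulA_vtxr u v w : qpath v w -> mulA (pcls v w) (vtx u) = if pend v w == u then pcls v w else 0.
Proof. by move=> wP; rewrite /vtx mulA_pcls // cats0. Qed.

Lemma coef_mulA_vtxr x u q : (mulA x (vtx u)) q = x q * (pend (qv q) (qs q) == u)%:R.
Proof.
rewrite mulA_expandl alg_coef_sum (bigD1 q) //= big1 => [|p np].
  by rewrite addr0 alg_coefZ /bq mulA_vtxr ?qpathQ //; case: eqP; rewrite ?bqE ?eqxx ?alg_coef0.
rewrite alg_coefZ /bq mulA_vtxr ?qpathQ //; case: eqP; rewrite ?alg_coef0 ?mulr0 //.
by rewrite -/(bq p) bqE eq_sym (negbTE np) mulr0.
Qed.

Lemma coef_mulA_vtxl x u q : (mulA (vtx u) x) q = x q * (qv q == u)%:R.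
Proof.
rewrite mulA_expandr alg_coef_sum (bigD1 q) //= big1 => [|p np].
  by rewrite addr0 alg_coefZ /bq mulA_vtxl ?qpathQ // eq_sym; case: eqP; rewrite ?bqE ?eqxx ?alg_coef0.
rewrite alg_coefZ /bq mulA_vtxl ?qpathQ //; case: eqP; rewrite ?alg_coef0 ?mulr0 //.
by rewrite -/(bq p) bqE eq_sym (negbTE np) mulr0.
Qed.

Lemma mulA_vtx_idem u : mulA (vtx u) (vtx u) = vtx u.
Proof. by rewrite {2}/vtx mulA_vtxl // eqxx. Qed.

Lemma mulA_vtx_orth u v : u != v -> mulA (vtx v) (vtx u) = 0.
Proof. by move=> ne; rewrite {2}/vtx mulA_vtxl // eq_sym (negbTE ne). Qed.

Lemma pendQ_neq (q : Q) : qs q != [::] -> pend (qv q) (qs q) != qv q.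
Proof.
move=> ne; apply/eqP => e; move/eqP: ne; apply.
by apply: (I_acyclic (qpathQ q)) => //; case/and3P: (qrepQ q).
Qed.

(* vertices and arrows generate the algebra *)
Lemma derivation_eq0 D : derivation D -> (forall u, D (vtx u) = 0) -> (forall r, D (arr r) = 0) ->
  forall x, D x = 0.
Proof.
move=> [L M] Dv Da.
have Dp w v : qpath v w -> D (pcls v w) = 0.
  elim: w v => [|r w IH] v; first by move=> _; apply: Dv.
  rewrite -cat1s qpath_cat qpath1 => /andP [/eqP <- wP].
  have <- : mulA (arr r) (pcls (h r) w) = pcls (t r) ([:: r] ++ w).
    by rewrite /arr mulA_pcls ?qpath1 // eqxx.
  by rewrite M Da IH // mulA0l mulA0r addr0.
by move=> x; rewrite (lin_expand L) big1 // => q _; rewrite /bq Dp ?qpathQ // scaler0.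
Qed.

End Generators.

Section ArrowDerivation.
Variables (V E : finType) (t h : E -> V) (G : pred (seq E)) (k : fieldType).

Local Notation qpath := (is_qpath t h).
Local Notation pend := (pend h).
Local Notation A := (Alg t h G k).
Local Notation pcls := (pcls t h G k).
Local Notation mulA := (@Defs.mulA V E t h G k).
Local Notation bq := (@bq V E t h G k).

Hypothesis I_complete : complete t h G.

Variables (r : E) (s : seq E).
Hypothesis s_path : qpath (t r) s.
Hypothesis s_pend : pend (t r) s = h r.
Hypothesis s_nil : s != [::].

Definition subst_at i (w : seq E) := take i w ++ s ++ drop i.+1 w.

Definition Dpath v w : A :=
  \sum_(0 <= i < size w) if nth r w i == r then pcls v (subst_at i w) else 0.

Lemma subst_at_path v w i : qpath v w -> (i < size w)%N -> nth r w i = r ->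
  qpath v (subst_at i w) /\ pend v (subst_at i w) = pend v w.
Proof.
move=> wP ltiw wir.
have w_split : w = take i w ++ [:: r] ++ drop i.+1 w.
  by rewrite /= -wir -drop_nth // cat_take_drop.
rewrite {1}w_split in wP; rewrite [in RHS]w_split.
have tr : t r = pend v (take i w).
  by move: wP; rewrite !qpath_cat qpath1 => /and3P [_ /eqP -> _].
by apply: qpath_subst; rewrite -?tr.
Qed.

Lemma size_subst_at w i : (i < size w)%N -> (size w <= size (subst_at i w))%N.
Proof.
move=> ltiw; rewrite /subst_at !size_cat size_takel ?size_drop; last exact: ltnW.
have : (0 < size s)%N by case: (s) s_nil.
lia.
Qed.

(* completeness: substituting a parallel path never leaves I *)
Lemma subst_at_nrep v w i : qpath v w -> (i < size w)%N -> nth r w i = r ->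
  ~~ qrep t h G v w -> ~~ qrep t h G v (subst_at i w).
Proof.
move=> wP ltiw wir nvw; have [sP sE] := subst_at_path wP ltiw wir.
apply/negP => /and3P [_ notI small]; apply: (negP nvw).
rewrite /qrep wP /=; apply/andP; split.
  by apply: contra notI; apply: I_complete wP sP erefl (esym sE).
exact: leq_ltn_trans (size_subst_at ltiw) small.
Qed.

Lemma Dpath_nrep v w : qpath v w -> ~~ qrep t h G v w -> Dpath v w = 0.
Proof.
move=> wP nvw; rewrite /Dpath big_nat big1 // => i /andP [_ ltiw].
by case: eqP => // wir; apply: pcls_nrep (subst_at_nrep wP ltiw wir nvw).
Qed.

Lemma Dr_lin (a : k) (x y : A) : Dr r s (a *: x + y) = a *: Dr r s x + Dr r s y.
Proof.
rewrite /Dr scaler_sumr -big_split; apply: eq_bigr => q _.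
by rewrite alg_coefD alg_coefZ scalerDl scalerA.
Qed.

Lemma Dr_bq q : Dr r s (bq q) = Dpath (qv q) (qs q).
Proof.
rewrite /Dr (bigD1 q) //= [X in _ + X]big1 => [|q' nq]; last by rewrite bqE (negbTE nq) scale0r.
by rewrite bqE eqxx scale1r addr0 /Dpath big_mkord.
Qed.

Lemma Dr_pcls v w : qpath v w -> Dr r s (pcls v w) = Dpath v w.
Proof.
move=> wP; case: (boolP (qrep t h G v w)) => vw; first by rewrite (pcls_toQ k vw) Dr_bq.
by rewrite pcls_nrep // Dpath_nrep // (lin0 Dr_lin).
Qed.

Lemma mulA_Dpathl v w v' w' : qpath v w -> qpath v' w' ->
  mulA (Dpath v w) (pcls v' w') = if pend v w == v' then
     \sum_(0 <= i < size w) (if nth r w i == r then pcls v (subst_at i w ++ w') else 0) else 0.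
Proof.
move=> wP w'P; rewrite /Dpath mulA_suml.
case: eqP => e; last first.
  rewrite big_nat big1 // => i /andP [_ ltiw]; rewrite mulA_ifl; case: eqP => // wir.
  have [sP sE] := subst_at_path wP ltiw wir.
  by rewrite mulA_pcls // sE; move/eqP: e => /negbTE ->.
rewrite !big_nat; apply: eq_bigr => i /andP [_ ltiw]; rewrite mulA_ifl; case: eqP => // wir.
have [sP sE] := subst_at_path wP ltiw wir.
by rewrite mulA_pcls // sE e eqxx.
Qed.

Lemma mulA_Dpathr v w v' w' : qpath v w -> qpath v' w' ->
  mulA (pcls v w) (Dpath v' w') = if pend v w == v' then
     \sum_(0 <= i < size w') (if nth r w' i == r then pcls v (w ++ subst_at i w') else 0) else 0.
Proof.
move=> wP w'P; rewrite /Dpath mulA_sumr.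
case: eqP => e; last first.
  rewrite big_nat big1 // => i /andP [_ ltiw]; rewrite mulA_ifr; case: eqP => // wir.
  have [sP sE] := subst_at_path w'P ltiw wir.
  by rewrite mulA_pcls //; move/eqP: e => /negbTE ->.
rewrite !big_nat; apply: eq_bigr => i /andP [_ ltiw]; rewrite mulA_ifr; case: eqP => // wir.
have [sP sE] := subst_at_path w'P ltiw wir.
by rewrite mulA_pcls // e eqxx.
Qed.

Lemma Dpath_cat v w w' :
  Dpath v (w ++ w') =
     \sum_(0 <= i < size w) (if nth r w i == r then pcls v (subst_at i w ++ w') else 0) +
     \sum_(0 <= i < size w') (if nth r w' i == r then pcls v (w ++ subst_at i w') else 0).
Proof.
rewrite /Dpath size_cat (@big_cat_nat _ _ _ (size w)) ?leq_addr //=.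
congr (_ + _).
  rewrite !big_nat; apply: eq_bigr => i /andP [_ ltiw].
  rewrite nth_cat ltiw /subst_at take_cat ltiw drop_cat.
  case: ltnP => leiw; first by rewrite -!catA.
  have -> : i.+1 = size w by apply/eqP; rewrite eqn_leq ltiw leiw.
  by rewrite subnn drop0 drop_size cats0 -catA.
rewrite -{1}(add0n (size w)) big_addn addKn !big_nat; apply: eq_bigr => i /andP [_ ltiw].
rewrite nth_cat ltnNge leq_addl /= addnK /subst_at take_cat ltnNge leq_addl /= addnK.
rewrite drop_cat.
have -> : ((i + size w).+1 < size w)%N = false by lia.
have -> : ((i + size w).+1 - size w)%N = i.+1 by lia.
by rewrite -!catA.
Qed.

Lemma Dr_derivation : @is_derivation V E t h G k (Dr r s).
Proof.
split; first exact: Dr_lin.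
apply: leibniz_bq; first exact: Dr_lin.
move=> p q; rewrite mulA_bq /mulb !Dr_bq /bq.
rewrite mulA_Dpathl ?qpathQ // mulA_Dpathr ?qpathQ //.
case: eqP => e; last by rewrite (lin0 Dr_lin) addr0.
by rewrite Dr_pcls ?Dpath_cat // qpath_cat qpathQ e qpathQ.
Qed.

End ArrowDerivation.

(* the sign of D_{r,r} in D_{p_f}: (r, true) lies on the orbit f iff r runs clockwise around f *)
Definition face_coef (E : finType) (k : fieldType) (f : {set E * bool}) (r : E) : k :=
  ((r, true) \in f)%:R - ((r, false) \in f)%:R.

Lemma face_coefE (E : finType) (k : fieldType) (f : {set E * bool}) r :
  face_coef k f r = \sum_(d in f) (if d.2 then 1 else -1) * (d.1 == r)%:R.
Proof.
rewrite big_mkcond (bigD1 (r, true)) //= (bigD1 (r, false)) /=; last by rewrite xpair_eqE andbF.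
rewrite big1 => [|d /andP [ntrue nfalse]].
  by rewrite eqxx !mulr1 addr0 /face_coef; case: ((r, true) \in f); case: ((r, false) \in f);
    rewrite ?subr0 ?sub0r ?add0r ?addr0.
case: (d \in f) => //; case: eqP; rewrite ?mulr0 // => dr.
by case: d ntrue nfalse dr => e [] /= ntrue nfalse er; subst e; rewrite eqxx in ntrue nfalse.
Qed.

Section Family.
Variables (V E : finType) (t h : E -> V) (G : pred (seq E)) (k : fieldType).
Variables (sigma : {perm (E * bool)}) (f0 : {set E * bool}).

Local Notation qpath := (is_qpath t h).
Local Notation pend := (pend h).
Local Notation A := (Alg t h G k).
Local Notation pcls := (pcls t h G k).
Local Notation mulA := (@Defs.mulA V E t h G k).
Local Notation bq := (@bq V E t h G k).
Local Notation derivation := (@is_derivation V E t h G k).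
Local Notation inner := (@is_inner V E t h G k).
Local Notation B2 := (B2idx t h G).
Local Notation BP := (BPidx sigma f0).
Local Notation F := (@hh1_family V E t h G k sigma f0).
Local Notation face_coef := (face_coef k).

Definition coboundary_face_free := forall (mu : V -> k) (c : BP -> k),
  (forall r, mu (t r) - mu (h r) + \sum_f c f * face_coef (val f) r = 0) -> forall f, c f = 0.

Definition coboundary_face_span := forall lam : E -> k, exists (mu : V -> k) (c : BP -> k),
  forall r, lam r = mu (t r) - mu (h r) + \sum_f c f * face_coef (val f) r.

Hypothesis G_ok : gens_ok t h G.
Hypothesis I_complete : complete t h G.
Hypothesis I_acyclic : acyclic t h G.

Local Notation vtx := (vtx t h G k).
Local Notation arr := (arr t h G k).
Local Notation vtxQ := (vtxQ G_ok).
Local Notation arrQ := (arrQ G_ok I_acyclic).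

Lemma Dr_vtx r s u : Dr r s (vtx u) = 0.
Proof. by rewrite (vtx_bq _ G_ok) Dr_bq /Dpath big_geq. Qed.

Lemma Dr_arr r' s r : Dr r' s (arr r) = if r == r' then pcls (t r) s else 0.
Proof. by rewrite (arr_bq _ G_ok I_acyclic) Dr_bq /Dpath big_nat1 /subst_at /= cats0 eq_sym. Qed.

Lemma Dface_vtx f u : Dface f (vtx u) = 0.
Proof. by rewrite /Dface big1 // => d _; rewrite Dr_vtx scaler0. Qed.

Lemma Dface_arr f r : Dface f (arr r) = face_coef f r *: arr r.
Proof.
rewrite /Dface face_coefE scaler_suml; apply: eq_bigr => d _.
rewrite Dr_arr eq_sym; case: eqP => [<-|_]; last by rewrite mulr0 !scale0r scaler0.
by rewrite mulr1.
Qed.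

Lemma B2_parallel (i : B2) : [/\ qpath (t (val i).1) (qs (val i).2),
   pend (t (val i).1) (qs (val i).2) = h (val i).1 & qs (val i).2 != [::]].
Proof.
case: i => [[r q] iP] /=; case/and3P: (iP) => /eqP qt /eqP qh _.
split; [by rewrite -qt qpathQ | by rewrite -qt |].
apply/negP => /eqP q_nil; move: qh; rewrite q_nil /Defs.pend /= qt => trh.
by move: (arrow_not_loop G_ok I_acyclic r); rewrite trh eqxx.
Qed.

Lemma family_derivation i : derivation (F i).
Proof.
case: i => [i|f] /=; first by case: (B2_parallel i) => *; apply: Dr_derivation.
by apply: derivation_comb => d; apply: Dr_derivation; rewrite ?qpath1.
Qed.

Lemma family_vtx i u : F i (vtx u) = 0.
Proof. by case: i => [i|f] /=; rewrite ?Dr_vtx ?Dface_vtx. Qed.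

Lemma family_sum_arr (c : B2 + BP -> k) r :
  \sum_i c i *: F i (arr r) =
  \sum_(i : B2) c (inl i) *: (if r == (val i).1 then bq (val i).2 else 0) +
  (\sum_(f : BP) c (inr f) * face_coef (val f) r) *: arr r.
Proof.
rewrite big_sumType; congr (_ + _).
  apply: eq_bigr => i _ /=; congr (_ *: _); rewrite Dr_arr; case: eqP => // ->.
  by case: i => [[r' q] /= /and3P [/eqP qt _ _]]; rewrite /bq qt.
by rewrite scaler_suml; apply: eq_bigr => f _; rewrite /= Dface_arr scalerA.
Qed.

Lemma coef_B2_sum (c : B2 -> k) r q :
  (\sum_(i : B2) c i *: (if r == (val i).1 then bq (val i).2 else 0)) q =
  \sum_(i : B2) c i * (val i == (r, q))%:R.
Proof.
rewrite alg_coef_sum; apply: eq_bigr => i _; rewrite alg_coefZ; congr (_ * _).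
case: i => [[r' q'] _] /=; rewrite xpair_eqE eq_sym.
by case: eqP => _ /=; rewrite ?alg_coef0 // bqE eq_sym.
Qed.

Lemma sum_B2_pick (c : B2 -> k) (i0 : B2) : \sum_(i : B2) c i * (val i == val i0)%:R = c i0.
Proof.
rewrite (bigD1 i0) //= eqxx mulr1 big1 ?addr0 // => i ni.
by rewrite (inj_eq val_inj) (negbTE ni) mulr0.
Qed.

Lemma sum_B2_none (c : B2 -> k) r q : (forall i : B2, val i != (r, q)) ->
  \sum_(i : B2) c i * (val i == (r, q))%:R = 0.
Proof. by move=> nB2; rewrite big1 // => i _; rewrite (negbTE (nB2 i)) mulr0. Qed.

Lemma arrQ_notB2 (i : B2) : (val i).2 != arrQ (val i).1.
Proof.
apply/eqP => e; case: i e => [[r q] /= /and3P [_ _ nr]] e.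
by move: nr; rewrite e toQ_s eqxx.
Qed.

Lemma vertex_commutant (a : A) : (forall u, mulA a (vtx u) = mulA (vtx u) a) ->
  a = \sum_u a (vtxQ u) *: vtx u.
Proof.
move=> a_comm; apply/ffunP => q; rewrite alg_coef_sum.
case: (eqVneq (qs q) [::]) => q_nil.
  rewrite (bigD1 (qv q)) //= big1 => [|u nu].
    by rewrite alg_coefZ vtx_bq bqE -vtxQ_eq // eqxx mulr1 addr0.
  rewrite alg_coefZ vtx_bq bqE; case: eqP => [e|]; last by rewrite mulr0.
  by move: nu; rewrite e toQ_v eqxx.
rewrite big1 => [|u _]; last first.
  rewrite alg_coefZ vtx_bq bqE; case: eqP => [e|]; last by rewrite mulr0.
  by move: q_nil; rewrite e toQ_s eqxx.
have := congr1 (fun z : A => z q) (a_comm (qv q)).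
rewrite /= coef_mulA_vtxr coef_mulA_vtxl eqxx.
by rewrite (negbTE (pendQ_neq I_acyclic q_nil)) mulr0 mulr1 => /esym.
Qed.

Lemma inner_vtx_comb_arr (mu : V -> k) r :
  mulA (\sum_u mu u *: vtx u) (arr r) - mulA (arr r) (\sum_u mu u *: vtx u) =
  (mu (t r) - mu (h r)) *: arr r.
Proof.
rewrite mulA_suml mulA_sumr scalerBl /arr; congr (_ - _).
  rewrite (bigD1 (t r)) //= mulAZl mulA_vtxl ?qpath1 // eqxx big1 ?addr0 // => u nu.
  by rewrite mulAZl mulA_vtxl ?qpath1 // (negbTE nu) scaler0.
rewrite (bigD1 (h r)) //= mulAZr mulA_vtxr ?qpath1 // eqxx big1 ?addr0 // => u nu.
by rewrite mulAZr mulA_vtxr ?qpath1 //= eq_sym (negbTE nu) scaler0.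
Qed.

Lemma inner_vtx_comb_vtx (mu : V -> k) v :
  mulA (\sum_u mu u *: vtx u) (vtx v) - mulA (vtx v) (\sum_u mu u *: vtx u) = 0.
Proof.
rewrite mulA_suml mulA_sumr -sumrB big1 // => u _.
rewrite mulAZl mulAZr /vtx mulA_vtxl // mulA_vtxr //= eq_sym.
by case: eqP => _; rewrite ?subrr.
Qed.

Lemma family_independent : coboundary_face_free ->
  forall c : B2 + BP -> k, inner (fun x => \sum_i c i *: F i x) -> forall i, c i = 0.
Proof.
move=> free c [a a_inner].
have a_comm u : mulA a (vtx u) = mulA (vtx u) a.
  apply/eqP; rewrite -subr_eq0 -a_inner.
  by rewrite big1 // => i _; rewrite family_vtx scaler0.
have a_diag := vertex_commutant a_comm.
have c_arr r : \sum_i c i *: F i (arr r) = (a (vtxQ (t r)) - a (vtxQ (h r))) *: arr r.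
  by rewrite a_inner [in mulA a _]a_diag [in mulA _ a]a_diag inner_vtx_comb_arr.
have cB2 (i : B2) : c (inl i) = 0.
  have := congr1 (fun z : A => z (val i).2) (c_arr (val i).1).
  rewrite /= family_sum_arr alg_coefD coef_B2_sum !alg_coefZ (arr_bq _ G_ok I_acyclic) bqE.
  rewrite (negbTE (arrQ_notB2 i)) !mulr0 addr0 -surjective_pairing.
  by rewrite (sum_B2_pick (fun i => c (inl i))).
have cBP r : a (vtxQ (t r)) - a (vtxQ (h r)) = \sum_(f : BP) c (inr f) * face_coef (val f) r.
  have := congr1 (fun z : A => z (arrQ r)) (c_arr r).
  rewrite /= family_sum_arr alg_coefD coef_B2_sum !alg_coefZ (arr_bq _ G_ok I_acyclic) bqE.
  by rewrite eqxx !mulr1 big1 ?add0r // => i _; rewrite cB2 mul0r.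
case=> [i|f]; first exact: cB2.
apply: (free (fun u => - a (vtxQ u)) (fun f => c (inr f))) => r; rewrite -cBP; ring.
Qed.


Lemma derivation_vtx_inner D : derivation D ->
  exists a0 : A, forall u, D (vtx u) = mulA a0 (vtx u) - mulA (vtx u) a0.
Proof.
move=> [L M].
pose a0 : A := \sum_q (if qs q == [::] then 0 else - D (vtx (qv q)) q) *: bq q.
exists a0 => u; apply/ffunP => q.
rewrite alg_coefB coef_mulA_vtxr coef_mulA_vtxl /a0 alg_coef_sum_bq.
have D_idem : D (vtx u) q =
    D (vtx u) q * (pend (qv q) (qs q) == u)%:R + D (vtx u) q * (qv q == u)%:R.
  by rewrite -{1}mulA_vtx_idem M alg_coefD coef_mulA_vtxr coef_mulA_vtxl.
have D_orth v : v != u ->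
    0 = D (vtx v) q * (pend (qv q) (qs q) == u)%:R + D (vtx u) q * (qv q == v)%:R.
  move=> neq; have := congr1 (fun z : A => z q) (M (vtx v) (vtx u)).
  have uv : u != v by rewrite eq_sym.
  rewrite mulA_vtx_orth //.
  by rewrite (lin0 L) alg_coef0 alg_coefD coef_mulA_vtxr coef_mulA_vtxl.
case: (eqVneq (qs q) [::]) => q_nil.
  rewrite q_nil /= mul0r subrr; move: D_idem; rewrite q_nil /=.
  case: eqP => _; last by rewrite !mulr0 addr0.
  by rewrite mulr1 => e; apply: (addrI (D (vtx u) q)); rewrite addr0 -e.
have ne := pendQ_neq I_acyclic q_nil.
case: (eqVneq (qv q) u) => qu.
  by subst u; rewrite (negbTE ne) mulr0 mulr1 sub0r opprK.
case: (eqVneq (pend (qv q) (qs q)) u) => pu.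
  have := D_orth (qv q) qu; rewrite pu !eqxx !mulr1 => /eqP; rewrite eq_sym addr_eq0 => /eqP ->.
  by rewrite mulr0 subr0 opprK.
by move: D_idem; rewrite (negbTE qu) (negbTE pu) !mulr0 addr0 => ->; rewrite subrr.
Qed.

Lemma derivation_arr_parallel D : derivation D -> (forall u, D (vtx u) = 0) ->
  forall r q, D (arr r) q != 0 -> (qv q == t r) && (pend (qv q) (qs q) == h r).
Proof.
move=> [_ M] Dvtx r q nz.
have Et : D (arr r) q = D (arr r) q * (qv q == t r)%:R.
  have := congr1 (fun z : A => z q) (M (vtx (t r)) (arr r)).
  by rewrite /arr mulA_vtxl ?qpath1 // eqxx -/(arr r) Dvtx mulA0l add0r coef_mulA_vtxl.
have Eh : D (arr r) q = D (arr r) q * (pend (qv q) (qs q) == h r)%:R.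
  have := congr1 (fun z : A => z q) (M (arr r) (vtx (h r))).
  by rewrite /arr mulA_vtxr ?qpath1 //= eqxx -/(arr r) Dvtx mulA0r addr0 coef_mulA_vtxr.
move: Et Eh; case: eqP => _; last by rewrite mulr0 => e; rewrite e eqxx in nz.
by case: eqP => _ //; rewrite mulr0 => _ e; rewrite e eqxx in nz.
Qed.

Lemma family_span_vtx0 D : coboundary_face_span -> derivation D -> (forall u, D (vtx u) = 0) ->
  exists (c : B2 + BP -> k) (a : A),
    forall x, D x - \sum_i c i *: F i x = mulA a x - mulA x a.
Proof.
move=> span Dder Dvtx.
have [mu [cf Hmu]] := span (fun r => D (arr r) (arrQ r)).
pose c (i : B2 + BP) : k :=
  match i with inl j => D (arr (val j).1) (val j).2 | inr f => cf f end.
pose a := \sum_u mu u *: vtx u.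
pose T x := D x - \sum_i c i *: F i x - (mulA a x - mulA x a).
suff T0 x : T x = 0 by exists c, a => x; apply/eqP; rewrite -subr_eq0 -/(T x) T0.
apply: derivation_eq0 x.
- apply: derivationB; last exact: derivation_inner.
  by apply: derivationB => //; apply: derivation_comb; apply: family_derivation.
- move=> u; rewrite /T Dvtx inner_vtx_comb_vtx subr0 sub0r big1 ?oppr0 // => i _.
  by rewrite family_vtx scaler0.
move=> r; apply/ffunP => q.
rewrite /T /a inner_vtx_comb_arr alg_coef0 !alg_coefB family_sum_arr alg_coefD coef_B2_sum !alg_coefZ.
rewrite (arr_bq _ G_ok I_acyclic) bqE.
case: (eqVneq q (arrQ r)) => [->|nq].
  rewrite sum_B2_none => [|i]; last by apply/eqP => ei; move: (arrQ_notB2 i); rewrite ei eqxx.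
  by rewrite !mulr1 (Hmu r); ring.
rewrite !mulr0 addr0 subr0.
case: (boolP ((qv q == t r) && (pend (qv q) (qs q) == h r))) => par.
  have rqB2 : [&& qv (r, q).2 == t (r, q).1, pend (qv (r, q).2) (qs (r, q).2) == h (r, q).1
     & qs (r, q).2 != [:: (r, q).1]].
    case/andP: par => -> -> /=; apply/negP => /eqP e; by rewrite (arrQ_eq G_ok I_acyclic e) eqxx in nq.
  by rewrite (sum_B2_pick (fun i => c (inl i)) (exist _ (r, q) rqB2)) subrr.
have Dq0 : D (arr r) q = 0 by apply/eqP; apply: contraNT par; apply: derivation_arr_parallel.
rewrite Dq0 sum_B2_none ?subrr // => i; apply/eqP => ei; move: par.
by case: i ei => [[r' q'] /= /and3P [qt qh _]] [<- <-]; rewrite qt qh.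
Qed.

Lemma family_spanning : coboundary_face_span ->
  forall D, derivation D -> exists c : B2 + BP -> k, inner (fun x => D x - \sum_i c i *: F i x).
Proof.
move=> span D Dder; have [a0 Da0] := derivation_vtx_inner Dder.
pose D1 x := D x - (mulA a0 x - mulA x a0).
have D1der : derivation D1 by apply: derivationB => //; apply: derivation_inner.
have D1vtx u : D1 (vtx u) = 0 by rewrite /D1 Da0 subrr.
have [c [a Ha]] := family_span_vtx0 span D1der D1vtx.
exists c, (a0 + a) => x.
by rewrite innerD -Ha /D1 [RHS]addrC addrAC subrK.
Qed.

End Family.

Section Faces.
Variables (V E : finType) (t h : E -> V) (k : fieldType) (sigma : {perm (E * bool)}).
Hypothesis sigma_rot : rotation_system t h sigma.

Local Notation fp := (face_perm sigma).
Local Notation dorig := (dorig t h).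
Local Notation face_coef := (face_coef k).

Definition face (d : E * bool) : {set E * bool} := [set d' | fconnect fp d d'].

Lemma drevK : involutive (@drev E).
Proof. by case=> e b; rewrite /drev /= negbK. Qed.

Lemma face_perm_inj : injective fp.
Proof. by move=> x y /perm_inj; apply: (inv_inj drevK). Qed.

Lemma sigma_face_perm d : sigma d = fp (drev d).
Proof. by rewrite /face_perm drevK. Qed.

Lemma face_refl d : d \in face d.
Proof. by rewrite inE connect0. Qed.

Lemma face_eq d d' : d' \in face d -> face d' = face d.
Proof.
rewrite inE => dd'; apply/setP => x; rewrite !inE.
apply/idP/idP => H; first exact: connect_trans dd' H.
by apply: connect_trans _ H; rewrite (fconnect_sym face_perm_inj).
Qed.

Lemma face_perm_face d : face (fp d) = face d.
Proof. by apply: face_eq; rewrite inE fconnect1. Qed.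

Lemma mem_faces f d : f \in faces sigma -> (d \in f) = (f == face d).
Proof.
case/imsetP => d0 _ ->; rewrite -/(face d0).
by apply/idP/eqP => [/face_eq -> // | ->]; apply: face_refl.
Qed.

(* around a face every dart enters the vertex that the next one leaves *)
Lemma face_boundary_cycle f u : f \in faces sigma ->
  \sum_r face_coef f r * ((t r == u)%:R - (h r == u)%:R) = 0.
Proof.
move=> f_face.
have -> : \sum_r face_coef f r * ((t r == u)%:R - (h r == u)%:R) =
   \sum_(d in f) (((dorig d == u)%:R : k) - (dorig (drev d) == u)%:R).
  under eq_bigr => r _ do rewrite face_coefE mulr_suml.
  rewrite exchange_big /=; apply: eq_bigr => d _.
  rewrite (bigD1 d.1) //= big1 => [|r nr]; last by rewrite eq_sym (negbTE nr) mulr0 mul0r.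
  by rewrite eqxx mulr1 addr0 /dorig /drev /=; case: d.2 => /=; ring.
rewrite sumrB; apply/eqP; rewrite subr_eq0; apply/eqP.
have fp_closed d : (fp d \in f) = (d \in f).
  by rewrite !(mem_faces _ f_face) face_perm_face.
rewrite (reindex_inj face_perm_inj) /=; apply: eq_big => d; first by rewrite fp_closed.
by case: sigma_rot => sigma_orig _; rewrite /face_perm sigma_orig.
Qed.

Hypothesis connected : quiver_connected t h.

Lemma dart_invariant_const (C : E * bool -> k) :
  (forall d, C (sigma d) = C d) -> (forall d, C (drev d) = C d) -> forall d d', C d = C d'.
Proof.
move=> Csigma Cdrev.
have Cvtx d d' : dorig d = dorig d' -> C d = C d'.
  case: sigma_rot => _ /(_ d d') rot_orbit /rot_orbit conn.
  by apply: (@fconnect_invariant _ sigma _ C _ d d' conn) => x; rewrite /= Csigma eqxx.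
have Cpath u w : connect (undir_adj t h) u w ->
    forall d d', dorig d = u -> dorig d' = w -> C d = C d'.
  move=> /connectP [p Hp ->] {w}.
  elim: p u Hp => [|x p IH] u /=; first by move=> _ d d' <- e; apply: Cvtx.
  case/andP => /existsP [e He] Hpx d d' Hd Hd'.
  case/orP: He => /andP [/eqP e1 /eqP e2].
    rewrite (Cvtx d (e, true)) /dorig /= ?e1 -?Hd //.
    by rewrite -[(e, true)]/(drev (e, false)) Cdrev; apply: (IH x Hpx).
  rewrite (Cvtx d (e, false)) /dorig /= ?e1 -?Hd //.
  by rewrite -[(e, false)]/(drev (e, true)) Cdrev; apply: (IH x Hpx).
by move=> d d'; apply: Cpath (connected _ _) d d' erefl erefl.
Qed.

Variable f0 : {set E * bool}.
Hypothesis f0_face : f0 \in faces sigma.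
Local Notation BP := (BPidx sigma f0).

(* d |-> c (face of d) takes the same value on both darts of an arrow and is
   sigma-invariant, hence constant by connectedness; it vanishes on f0 *)
Lemma face_coef_free (c : BP -> k) :
  (forall r, \sum_f c f * face_coef (val f) r = 0) -> forall f, c f = 0.
Proof.
move=> cr.
pose C d := \sum_(f : BP) c f * (d \in val f)%:R.
have CE d : C d = \sum_(f : BP) c f * (val f == face d)%:R.
  by apply: eq_bigr => f _; rewrite mem_faces //; case/andP: (valP f).
have Carrow r : C (r, true) = C (r, false).
  have := cr r; under eq_bigr do rewrite /face_coef mulrBr.
  by rewrite sumrB => /eqP; rewrite subr_eq0 => /eqP.
have Cdrev d : C (drev d) = C d by case: d => r [] /=; rewrite /drev /= Carrow.
have Csigma d : C (sigma d) = C d by rewrite sigma_face_perm CE face_perm_face -CE Cdrev.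
have Cconst := dart_invariant_const Csigma Cdrev.
have [d0 _ f0E] := imsetP f0_face; rewrite -/(face d0) in f0E.
have C0 : C d0 = 0.
  by rewrite CE -f0E big1 // => f _; have /andP [_ /negbTE ->] := valP f; rewrite mulr0.
move=> f; have /andP [/imsetP [d _ fE] _] := valP f; rewrite -/(face d) in fE.
have := Cconst d d0; rewrite C0 CE (bigD1 f) //= fE eqxx mulr1 big1 ?addr0 // => f' nf.
case: eqP; rewrite ?mulr0 // => ef.
have e' : f' = f by apply: val_inj; rewrite /= ef -fE.
by rewrite e' eqxx in nf.
Qed.

End Faces.

Section Laplacian.
Variables (V E : finType) (t h : E -> V) (v0 : V).
Hypothesis connected : quiver_connected t h.

Lemma connected_const (T : Type) (g : V -> T) : (forall e, g (t e) = g (h e)) -> forall u w, g u = g w.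
Proof.
move=> gE u w; have /connectP [p Hp ->] := connected u w.
elim: p u Hp => [|x p IH] u //= /andP [/existsP [e He] Hpx].
by rewrite -(IH x Hpx); case/orP: He => /andP [/eqP <- /eqP <-].
Qed.

Local Notation n := #|V|.
Local Notation vval := (@enum_val V xpredT).
Local Notation vrank := (@enum_rank V).

Definition incidence (R : nzRingType) (e : E) (i : 'I_n) : R :=
  (t e == vval i)%:R - (h e == vval i)%:R.

Definition ground_vec (R : nzRingType) (i : 'I_n) : R := (vval i == v0)%:R.

Definition grounded_laplacian (R : nzRingType) : 'M[R]_n :=
  \matrix_(i, j) (\sum_e incidence R e i * incidence R e j + ground_vec R i * ground_vec R j).

Lemma sum_enum_val_delta (R : nzRingType) (y : 'I_n -> R) x : \sum_i y i * (x == vval i)%:R = y (vrank x).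
Proof.
rewrite (bigD1 (vrank x)) //= enum_rankK eqxx mulr1 big1 ?addr0 // => i ni.
by case: eqP; rewrite ?mulr0 // => e; move: ni; rewrite e enum_valK eqxx.
Qed.

Lemma grounded_laplacian_row (R : comNzRingType) (y : 'rV[R]_n) j :
  (y *m grounded_laplacian R) 0 j =
  \sum_e (y 0 (vrank (t e)) - y 0 (vrank (h e))) * incidence R e j +
  y 0 (vrank v0) * ground_vec R j.
Proof.
rewrite !mxE.
have -> : \sum_i y 0 i * grounded_laplacian R i j = \sum_i
    (\sum_e y 0 i * incidence R e i * incidence R e j + y 0 i * ground_vec R i * ground_vec R j).
  apply: eq_bigr => i _; rewrite mxE mulrDr mulr_sumr; congr (_ + _); last by ring.
  by apply: eq_bigr => e _; ring.
rewrite big_split /=; congr (_ + _).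
  rewrite exchange_big /=; apply: eq_bigr => e _; rewrite -mulr_suml; congr (_ * _).
  by rewrite /incidence; under eq_bigr do rewrite mulrBr; rewrite sumrB !sum_enum_val_delta.
by rewrite -mulr_suml /ground_vec; under eq_bigr do rewrite eq_sym; rewrite sum_enum_val_delta.
Qed.

Lemma grounded_laplacian_quad (R : comNzRingType) (y : 'rV[R]_n) :
  \sum_j (y *m grounded_laplacian R) 0 j * y 0 j =
  \sum_e (y 0 (vrank (t e)) - y 0 (vrank (h e))) ^+ 2 + y 0 (vrank v0) ^+ 2.
Proof.
under eq_bigr do rewrite grounded_laplacian_row mulrDl mulr_suml.
rewrite big_split /=; congr (_ + _).
  rewrite exchange_big /=; apply: eq_bigr => e _.
  under eq_bigr do rewrite -mulrA; rewrite -mulr_sumr expr2; congr (_ * _).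
  by rewrite /incidence; under eq_bigr do rewrite mulrC mulrBr; rewrite sumrB !sum_enum_val_delta.
under eq_bigr do rewrite -mulrA; rewrite -mulr_sumr expr2; congr (_ * _); rewrite /ground_vec.
by under eq_bigr do rewrite mulrC eq_sym; rewrite sum_enum_val_delta.
Qed.

(* over rat the quadratic form above is positive definite *)
Lemma grounded_laplacian_rat_free (y : 'rV[rat]_n) : y *m grounded_laplacian rat = 0 -> y = 0.
Proof.
move=> y0.
have : \sum_j (y *m grounded_laplacian rat) 0 j * y 0 j = 0.
  by rewrite big1 // => j _; rewrite y0 mxE mul0r.
rewrite grounded_laplacian_quad => /eqP; rewrite paddr_eq0 ?sqr_ge0 //; last first.
  by apply: sumr_ge0 => e _; apply: sqr_ge0.
case/andP; rewrite psumr_eq0 => [/allP y_edges|e _]; last exact: sqr_ge0.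
rewrite sqrf_eq0 => /eqP yv0.
have y_const := @connected_const _ (fun v : V => y 0 (vrank v)).
apply/rowP => i; rewrite mxE -(enum_valK i) (y_const _ _ v0) // => e.
by apply/eqP; rewrite -subr_eq0 -sqrf_eq0; apply: y_edges; apply: mem_index_enum.
Qed.

Lemma grounded_laplacian_map (R : nzRingType) :
  map_mx (intr : int -> R) (grounded_laplacian int) = grounded_laplacian R.
Proof.
apply/matrixP => i j; rewrite !mxE rmorphD rmorph_sum /=; congr (_ + _).
  by apply: eq_bigr => e _; rewrite rmorphM /= /incidence !rmorphB /= !rmorph_nat.
by rewrite rmorphM /= /ground_vec !rmorph_nat.
Qed.

Lemma det_grounded_laplacian_int : \det (grounded_laplacian int) != 0.
Proof.
apply/negP => /eqP det0.
have : \det (grounded_laplacian rat) == 0.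
  by rewrite -grounded_laplacian_map det_map_mx det0 rmorph0.
by case/det0P => y ny /grounded_laplacian_rat_free y0; rewrite y0 eqxx in ny.
Qed.

Variable k : fieldType.
Hypothesis k_char0 : [pchar k] =i pred0.

Lemma intr_char0_neq0 (z : int) : z != 0 -> (z%:~R : k) != 0.
Proof.
have nat_neq0 := (pcharf0P k).1 k_char0.
case: z => m nz /=; first by rewrite nat_neq0; apply: contra nz => /eqP ->.
by rewrite NegzE mulrNz oppr_eq0 nat_neq0.
Qed.

Lemma grounded_laplacian_unit : grounded_laplacian k \in unitmx.
Proof.
rewrite unitmxE unitfE -grounded_laplacian_map det_map_mx.
exact/intr_char0_neq0/det_grounded_laplacian_int.
Qed.

Lemma laplacian_kernel_const (mu : V -> k) :
  (forall u, \sum_r (mu (t r) - mu (h r)) * ((t r == u)%:R - (h r == u)%:R) = 0) ->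
  forall u w, mu u = mu w.
Proof.
move=> harmonic.
pose y : 'rV[k]_n := \row_i (mu (vval i) - mu v0).
have /(congr1 (mulmx^~ (invmx (grounded_laplacian k)))) : y *m grounded_laplacian k = 0.
  apply/rowP => j; rewrite grounded_laplacian_row /y !mxE !enum_rankK subrr mul0r addr0.
  rewrite -[RHS](harmonic (vval j)); apply: eq_bigr => e _.
  by rewrite !mxE !enum_rankK /incidence; congr (_ * _); ring.
rewrite mul0mx mulmxK ?grounded_laplacian_unit // => y0.
have mu_v0 u : mu u = mu v0.
  apply/eqP; rewrite -subr_eq0.
  by have := congr1 (fun z : 'rV[k]_n => z 0 (vrank u)) y0; rewrite /= !mxE enum_rankK => ->.
by move=> u w; rewrite !mu_v0.
Qed.

End Laplacian.

Section CoboundaryFace.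
Variables (V E : finType) (t h : E -> V) (k : fieldType) (sigma : {perm (E * bool)}).
Hypothesis k_char0 : [pchar k] =i pred0.
Hypothesis connected : quiver_connected t h.
Hypothesis sigma_rot : rotation_system t h sigma.
Variable f0 : {set E * bool}.
Hypothesis f0_face : f0 \in faces sigma.

Local Notation BP := (BPidx sigma f0).
Local Notation face_coef := (face_coef k).

Lemma coboundary_face_relation (mu : V -> k) (c : BP -> k) :
  (forall r, mu (t r) - mu (h r) + \sum_f c f * face_coef (val f) r = 0) ->
  (forall f, c f = 0) /\ (forall u w, mu u = mu w).
Proof.
move=> rel.
have harmonic u : \sum_r (mu (t r) - mu (h r)) * ((t r == u)%:R - (h r == u)%:R) = 0.
  have -> : \sum_r (mu (t r) - mu (h r)) * ((t r == u)%:R - (h r == u)%:R) =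
     - \sum_r \sum_f c f * (face_coef (val f) r * ((t r == u)%:R - (h r == u)%:R)).
    rewrite -sumrN; apply: eq_bigr => r _.
    have -> : mu (t r) - mu (h r) = - \sum_f c f * face_coef (val f) r.
      by apply/eqP; rewrite -addr_eq0 rel.
    by rewrite mulNr mulr_suml; congr (- _); apply: eq_bigr => f _; rewrite mulrA.
  rewrite exchange_big /= big1 ?oppr0 // => f _.
  by rewrite -mulr_sumr (face_boundary_cycle k sigma_rot) ?mulr0 //; case/andP: (valP f).
have mu_const u w : mu u = mu w := laplacian_kernel_const u connected k_char0 harmonic u w.
split => //; apply: (face_coef_free sigma_rot connected f0_face) => r.
by have := rel r; rewrite (mu_const (t r) (h r)) subrr add0r.
Qed.

Lemma sum_enum_val (T : finType) (g : T -> k) : \sum_(i < #|T|) g (enum_val i) = \sum_x g x.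
Proof. by rewrite -big_enum_val. Qed.

Local Notation nV := #|V|.
Local Notation nB := #|{: BP}|.
Local Notation nE := #|E|.

Definition coboundary_face_mx : 'M[k]_(nV + nB, nE) := col_mx
  (\matrix_(i, j) ((t (enum_val j) == enum_val i)%:R - (h (enum_val j) == enum_val i)%:R))
  (\matrix_(i, j) face_coef (val (enum_val i)) (enum_val j)).

Lemma coboundary_face_mx_row (x : 'rV[k]_(nV + nB)) j :
  (x *m coboundary_face_mx) 0 j =
    lsubmx x 0 (enum_rank (t (enum_val j))) - lsubmx x 0 (enum_rank (h (enum_val j)))
    + \sum_(f : BP) rsubmx x 0 (enum_rank f) * face_coef (val f) (enum_val j).
Proof.
rewrite -{1}(hsubmxK x) mul_row_col mxE !mxE; congr (_ + _).
  by under eq_bigr do rewrite !mxE mulrBr; rewrite sumrB !sum_enum_val_delta.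
rewrite -[RHS](sum_enum_val (fun f => rsubmx x 0 (enum_rank f) * face_coef (val f) (enum_val j))).
by apply: eq_bigr => i _; rewrite !mxE enum_valK.
Qed.

Lemma kermx_coboundary_face_rank (v0 : V) : (\rank (kermx coboundary_face_mx) <= 1)%N.
Proof.
pose w0 : 'rV[k]_(nV + nB) := row_mx (const_mx 1) 0.
apply: leq_trans (rank_leq_row w0); apply: mxrankS; apply/row_subP => i.
set y := row i _; have : y *m coboundary_face_mx = 0 by rewrite -row_mul mulmx_ker row0.
clearbody y => y0.
have y_rel r : lsubmx y 0 (enum_rank (t r)) - lsubmx y 0 (enum_rank (h r))
    + \sum_f rsubmx y 0 (enum_rank f) * face_coef (val f) r = 0.
  have := congr1 (fun z : 'rV[k]_nE => z 0 (enum_rank r)) y0.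
  by rewrite /= coboundary_face_mx_row !enum_rankK => ->; rewrite mxE.
have [c0 mu_const] := @coboundary_face_relation
  (fun v => lsubmx y 0 (enum_rank v)) (fun f => rsubmx y 0 (enum_rank f)) y_rel.
have -> : y = lsubmx y 0 (enum_rank v0) *: w0.
  rewrite -{1}(hsubmxK y) /w0 scale_row_mx scaler0; congr row_mx; apply/rowP => j.
    rewrite [RHS]mxE [X in _ * X]mxE mulr1.
    by have := mu_const (enum_val j) v0; rewrite /= enum_valK.
  by rewrite [RHS]mxE; have := c0 (enum_val j); rewrite /= enum_valK.
exact: scalemx_sub.
Qed.

Lemma card_BPidx : nB = (#|faces sigma| - 1)%N.
Proof.
rewrite card_sig (cardsD1 f0 (faces sigma)) f0_face add1n subn1 /=.
by apply: eq_card => f; rewrite !inE andbC.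
Qed.

(* the kernel is spanned by the constant function on vertices, so Euler's
   formula makes the rank equal to the number of arrows *)
Lemma coboundary_face_mx_full (v0 : V) :
  (#|V| + #|faces sigma| = #|E| + 2)%N -> row_full coboundary_face_mx.
Proof.
move=> euler; rewrite /row_full eqn_leq rank_leq_col /=.
have := kermx_coboundary_face_rank v0; rewrite mxrank_ker.
have := card_BPidx; have : (0 < #|faces sigma|)%N by apply/card_gt0P; exists f0.
move: euler; set F := #|faces sigma|; set B := #|{: BP}|; set r := \rank _.
set nv := #|V|; set ne := #|E|; lia.
Qed.

Lemma planar_coboundary_face_span (v0 : V) :
  (#|V| + #|faces sigma| = #|E| + 2)%N -> coboundary_face_span t h k sigma f0.
Proof.
move=> euler lam; pose l : 'rV[k]_nE := \row_j lam (enum_val j).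
have /submxP [x lx] : (l <= coboundary_face_mx)%MS.
  exact/submx_full/(coboundary_face_mx_full v0).
exists (fun v => lsubmx x 0 (enum_rank v)), (fun f => rsubmx x 0 (enum_rank f)) => r.
have := congr1 (fun z : 'rV[k]_nE => z 0 (enum_rank r)) lx.
by rewrite /= coboundary_face_mx_row mxE !enum_rankK.
Qed.

Lemma planar_coboundary_face_free : coboundary_face_free t h k sigma f0.
Proof. by move=> mu c /coboundary_face_relation []. Qed.

Lemma coboundary_face_free0 : #|E| = 0%N -> coboundary_face_free t h k sigma f0.
Proof.
move=> E0 mu c _ f; have /andP [/imsetP [d _ _] _] := valP f.
by have := card0_eq E0 d.1; rewrite inE.
Qed.

Lemma coboundary_face_span0 : #|E| = 0%N -> coboundary_face_span t h k sigma f0.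
Proof. by move=> E0 lam; exists (fun=> 0), (fun=> 0) => r; have := card0_eq E0 r; rewrite inE. Qed.

End CoboundaryFace.

Theorem theorem4p7 (V E : finType) (t h : E -> V) (k : fieldType)
    (G : pred (seq E)) (sigma : {perm (E * bool)}) (f0 : {set E * bool}) :
  [pchar k]%R =i pred0 ->
  quiver_connected t h ->
  planar_embedding t h sigma ->
  (#|E| = 0%N \/ f0 \in faces sigma) ->
  gens_ok t h G -> complete t h G -> acyclic t h G ->
  hh1_basis (@hh1_family V E t h G k sigma f0).
Proof.
move=> k_char0 connected [sigma_rot euler] f0_face G_ok I_complete I_acyclic.
have [free span] : coboundary_face_free t h k sigma f0 /\ coboundary_face_span t h k sigma f0.
  case: (posnP #|E|) => [E0|E_gt0].
    by split; [apply: coboundary_face_free0 | apply: coboundary_face_span0].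
  have {}f0_face : f0 \in faces sigma by case: f0_face => // E0; rewrite E0 in E_gt0.
  have [e0 _] := sigW (card_gt0P E_gt0).
  split; first exact: planar_coboundary_face_free.
  exact: (planar_coboundary_face_span k_char0 connected sigma_rot f0_face (t e0) (euler E_gt0)).
split; first exact: family_derivation.
split; first exact: family_independent.
exact: family_spanning.
Qed.
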